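(* Let $m,p,n$ be positive integers with $p\mid m$, $n>1$, $G=G(m,p,n)$, and let $\mathbf T=(T_1,\ldots,T_n)$ be a tuple of commuting contractions on a Hilbert space. Then $\boldsymbol\theta(\mathbf T)=(\theta_1(\mathbf T),\dots,\theta_n(\mathbf T))$ is a $\boldsymbol\Theta_n$-contraction if and only if $\mathbf T$ satisfies von Neumann's inequality for all $G$-invariant polynomials, i.e. $\|q(\mathbf T)\|\le\sup_{\overline{\mathbb D}^n}|q|$ for every $G$-invariant $q\in\mathbb C[z_1,\ldots,z_n]$.
   Context: Put $q_0=m/p$. $G(m,p,n)$ is the group of $n\times n$ monomial matrices whose nonzero entries are $m$-th roots of unity and whose product of nonzero entries is an $(m/p)$-th root of unity; it acts on $\mathbb C^n$ by $\sigma\cdot z=\sigma^{-1}z$, and a polynomial $q$ is $G$-invariant if $q(\sigma^{-1}\cdot z)=q(z)$ for all $\sigma\in G$. $\theta_i(z)=s_i(z_1^m,\ldots,z_n^m)$ for $1\le i\le n-1$ ($s_i$ the $i$-th elementary symmetric polynomial), $\theta_n(z)=(z_1\cdots z_n)^{q_0}$, $\boldsymbol\Theta_n=\boldsymbol\theta(\mathbb D^n)$, $\overline{\boldsymbol\Theta}_n=\boldsymbol\theta(\overline{\mathbb D}^n)$. A commuting tuple $(S_1,\dots,S_n)$ is a $\boldsymbol\Theta_n$-contraction if $\|f(S_1,\dots,S_n)\|\le\sup_{\overline{\boldsymbol\Theta}_n}|f|$ for every polynomial $f$. *)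

From HB Require Import structures.
From mathcomp Require Import all_boot all_order all_algebra.
From mathcomp Require Import fingroup perm complex.
From mathcomp Require Import mpoly.
From mathcomp Require Import classical_sets reals.

Set Implicit Arguments.
Unset Strict Implicit.
Unset Printing Implicit Defensive.

Import Order.TTheory GRing.Theory Num.Theory.
Local Open Scope ring_scope.
Local Open Scope classical_set_scope.

Section Defs.
Variable R : realType.
Local Notation C := R[i].

Definition cabs (z : C) : R := ComplexField.Normc.normc z.

Section Hilbert.
Variable H : lmodType C.
Variable ip : H -> H -> C.

Definition hnorm (x : H) : R := Num.sqrt (complex.Re (ip x x)).

Record hilbert_space : Prop := {
  ip_linear : forall (a : C) (x y z : H), ip (a *: x + y) z = a * ip x z + ip y z;
  ip_conj : forall x y : H, ip y x = conjc (ip x y);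
  ip_pos : forall x : H, 0 <= ip x x;
  ip_def : forall x : H, ip x x = 0 -> x = 0;
  ip_complete : forall u : nat -> H,
    (forall e : R, 0 < e -> exists N, forall k l, (N <= k)%N -> (N <= l)%N ->
        hnorm (u k - u l) < e) ->
    exists x : H, forall e : R, 0 < e -> exists N, forall k, (N <= k)%N ->
        hnorm (u k - x) < e }.

Definition op_norm_le (A : H -> H) (s : R) : Prop :=
  forall x : H, hnorm (A x) <= s * hnorm x.

Definition contraction (A : H -> H) : Prop := op_norm_le A 1.

Definition commuting (n : nat) (T : 'I_n -> H -> H) : Prop :=
  forall i j (x : H), T i (T j x) = T j (T i x).

Definition op_monomial (n : nat) (T : 'I_n -> H -> H) (mu : 'X_{1.. n}) : H -> H :=
  foldr (fun i f => fun x => iter (mu i) (T i) (f x)) id (enum 'I_n).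

Definition op_eval (n : nat) (q : {mpoly C[n]}) (T : 'I_n -> H -> H) : H -> H :=
  fun x => \sum_(mu <- msupp q) q@_mu *: op_monomial T mu x.
End Hilbert.

Definition closed_polydisc (n : nat) : set ('I_n -> C) :=
  [set z | forall i, cabs (z i) <= 1].

(* theta_{i+1} for i : 'I_n (0-based indexing):
   theta_k = s_k(z_1^m, ..., z_n^m) for 1 <= k <= n-1,
   theta_n = (z_1 ... z_n)^(m/p) *)
Definition theta (m p n : nat) (i : 'I_n) : {mpoly C[n]} :=
  if (i.+1 < n)%N then comp_mpoly [tuple ('X_j ^+ m : {mpoly C[n]}) | j < n] (mesym n C i.+1)
  else (\prod_(j < n) 'X_j) ^+ (m %/ p).

Definition theta_map (m p n : nat) (z : 'I_n -> C) : 'I_n -> C :=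
  fun i => (theta m p i).@[z].

(* closure of Theta_n = theta(closed polydisc) *)
Definition closed_Theta (m p n : nat) : set ('I_n -> C) :=
  @theta_map m p n @` @closed_polydisc n.

Definition sup_abs (n : nat) (K : set ('I_n -> C)) (f : {mpoly C[n]}) : R :=
  sup [set cabs f.@[z] | z in K].

Definition Theta_contraction (m p : nat) (H : lmodType C) (ip : H -> H -> C)
    (n : nat) (S : 'I_n -> H -> H) : Prop :=
  commuting S /\
  forall f : {mpoly C[n]}, op_norm_le ip (op_eval f S) (sup_abs (@closed_Theta m p n) f).

Definition in_Gmpn (m p n : nat) (A : 'M[C]_n) : Prop :=
  exists (s : 'S_n) (c : 'I_n -> C),
    [/\ forall i, c i ^+ m = 1,
        (\prod_(i < n) c i) ^+ (m %/ p) = 1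
      & A = \matrix_(i, j) (if j == s i then c i else 0)].

Definition G_act (n : nat) (sigma : 'M[C]_n) (z : 'cV[C]_n) : 'cV[C]_n :=
  invmx sigma *m z.

Definition G_invariant (m p n : nat) (q : {mpoly C[n]}) : Prop :=
  forall sigma : 'M[C]_n, in_Gmpn m p sigma ->
    forall z : 'cV[C]_n,
      q.@[fun i => G_act (invmx sigma) z i 0] = q.@[fun i => z i 0].

Definition vN_ineq (H : lmodType C) (ip : H -> H -> C) (n : nat)
    (T : 'I_n -> H -> H) (q : {mpoly C[n]}) : Prop :=
  op_norm_le ip (op_eval q T) (sup_abs (@closed_polydisc n) q).

End Defs.

(* Every G(m,p,n)-invariant polynomial q is a polynomial in theta.  Invariance
   under the permutation matrices makes q symmetric; invariance under the
   diagonal matrices of G(m,p,n), tested with a primitive m-th root of unity,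
   shows that every exponent of q has the form (m/p) j (1,...,1) + m b with
   j < p.  Grouping monomials by j gives
     q = sum_j (z_1 ... z_n)^((m/p) j) g_j(z_1^m, ..., z_n^m)
   with g_j symmetric, so g_j = t_j(s_1, ..., s_n); as s_k(z^m) = theta_k for
   k < n and s_n(z^m) = theta_n^p, q = sum_j theta_n^j t_j(theta_1, ...,
   theta_(n-1), theta_n^p).  Conversely every f o theta is G-invariant.
   Since the functional calculus of commuting operators respects composition,
   f(theta(T)) = (f o theta)(T), and the sup of |f| over the closure of
   Theta_n is the sup of |f o theta| over the closed polydisc, von Neumann's
   inequality for q = f o theta is exactly the Theta_n-contraction inequality
   for f. *)

From HB Require Import structures.
From mathcomp Require Import all_boot all_order all_algebra.
From mathcomp Require Import fingroup perm complex.
From mathcomp Require Import mpoly.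
From mathcomp Require Import classical_sets reals.
From mathcomp Require Import ssrcomplements cyclic separable cyclotomic boolp.
Import Order.TTheory GRing.Theory Num.Theory.
Local Open Scope ring_scope.

Set Implicit Arguments.
Unset Strict Implicit.
Unset Printing Implicit Defensive.

Section LinearFunctions.
Variables (R : pzRingType) (V : lmodType R).
Implicit Types f g : V -> V.

Lemma linear_fun0 f : linear f -> f 0 = 0.
Proof. by move=> lf; have := zmod_morphism_linear lf 0 0; rewrite !subrr. Qed.

Lemma linear_fun_sum f I (r : seq I) (P : pred I) (F : I -> V) :
  linear f -> f (\sum_(i <- r | P i) F i) = \sum_(i <- r | P i) f (F i).
Proof.
move=> lf; elim/big_rec2: _ => [|i y1 y2 _ <-]; first exact: linear_fun0.
exact: (GRing.semilinear_linear lf).2.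
Qed.

Lemma linear_iter f k : linear f -> linear (iter k f).
Proof. by move=> lf a x y; elim: k => //= k ->; rewrite lf. Qed.

Lemma iter_commute f g k : (forall x, f (g x) = g (f x)) ->
  forall x, iter k f (g x) = g (iter k f x).
Proof. by move=> fg x; elim: k => //= k ->; rewrite fg. Qed.

End LinearFunctions.

Section OperatorCalculus.
Variables (R : realType) (H : lmodType R[i]) (n : nat) (S : 'I_n -> H -> H).
Hypotheses (S_linear : forall i, linear (S i)) (S_commute : commuting S).
Implicit Types (p q : {mpoly R[i][n]}) (c : R[i]) (x : H).

Let monomial_on (l : seq 'I_n) (mu : 'X_{1..n}) : H -> H :=
  foldr (fun i f => fun x => iter (mu i) (S i) (f x)) id l.

Let linear_monomial_on l mu : linear (monomial_on l mu).
Proof. by elim: l => [|i l IH] a x y //=; rewrite IH linear_iter. Qed.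

Let monomial_on_commute l mu g : (forall i x, S i (g x) = g (S i x)) ->
  forall x, monomial_on l mu (g x) = g (monomial_on l mu x).
Proof. by move=> Sg; elim: l => [|i l IH] x //=; rewrite IH iter_commute. Qed.

Lemma linear_op_monomial mu : linear (op_monomial S mu).
Proof. exact: linear_monomial_on. Qed.

Lemma op_monomial0 x : op_monomial S 0%MM x = x.
Proof. by rewrite /op_monomial; elim: (enum _) => //= i l ->; rewrite mnm0E. Qed.

Lemma op_monomialD mu nu x :
  op_monomial S (mu + nu)%MM x = op_monomial S mu (op_monomial S nu x).
Proof.
rewrite /op_monomial; elim: (enum _) x => [|i l IH] x //=.
rewrite mnmDE iterD IH; congr (iter _ _ _).
by symmetry; apply: monomial_on_commute => j y; rewrite (iter_commute _ (S_commute i j)).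
Qed.

Lemma op_eval_bounded q k x : (msize q <= k)%N ->
  op_eval q S x = \sum_(mu : 'X_{1..n < k}) q@_mu *: op_monomial S mu x.
Proof.
move=> q_k; rewrite /op_eval (big_mksub 'X_{1..n < k}) ?msupp_uniq //=; last first.
  by move=> mu /msize_mdeg_lt /leq_trans; apply.
by rewrite big_rmcond //= => mu /memN_msupp_eq0 ->; rewrite scale0r.
Qed.

Lemma op_evalD p q x : op_eval (p + q) S x = op_eval p S x + op_eval q S x.
Proof.
pose k := maxn (msize p) (msize q).
have p_k : (msize p <= k)%N by rewrite leq_maxl.
have q_k : (msize q <= k)%N by rewrite leq_maxr.
have pq_k : (msize (p + q) <= k)%N by rewrite (leq_trans (msizeD_le _ _)).
rewrite !(op_eval_bounded _ p_k, op_eval_bounded _ q_k, op_eval_bounded _ pq_k).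
by rewrite -big_split; apply: eq_bigr => mu _; rewrite mcoeffD scalerDl.
Qed.

Lemma op_evalZ c p x : op_eval (c *: p) S x = c *: op_eval p S x.
Proof.
rewrite (op_eval_bounded _ (leqnn (msize p))) (op_eval_bounded _ (msizeZ_le p c)).
by rewrite [RHS]scaler_sumr; apply: eq_bigr => mu _; rewrite mcoeffZ scalerA.
Qed.

Lemma op_eval_sum I (r : seq I) (P : pred I) (F : I -> {mpoly R[i][n]}) x :
  op_eval (\sum_(i <- r | P i) F i) S x = \sum_(i <- r | P i) op_eval (F i) S x.
Proof.
elim/big_rec2: _ => [|i y1 y2 _ <-]; last exact: op_evalD.
by rewrite /op_eval msupp0 big_nil.
Qed.

Lemma op_evalX mu x : op_eval 'X_[mu] S x = op_monomial S mu x.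
Proof. by rewrite /op_eval msuppX big_seq1 mcoeffX eqxx scale1r. Qed.

Lemma op_eval1 x : op_eval 1 S x = x.
Proof. by rewrite -mpolyX0 op_evalX op_monomial0. Qed.

Lemma op_evalM p q x : op_eval (p * q) S x = op_eval p S (op_eval q S x).
Proof.
rewrite mpolyME op_eval_sum big_allpairs {2}/op_eval; apply: eq_bigr => mu _.
have mu_linear := linear_op_monomial mu.
rewrite {2}/op_eval linear_fun_sum // [RHS]scaler_sumr; apply: eq_bigr => nu _.
by rewrite op_evalZ op_evalX op_monomialD (scalable_linear mu_linear) scalerA.
Qed.

End OperatorCalculus.

Section Composition.
Variables (R : realType) (H : lmodType R[i]) (k n : nat) (T : 'I_k -> H -> H).
Hypotheses (T_linear : forall i, linear (T i)) (T_commute : commuting T).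
Variable g : 'I_n -> {mpoly R[i][k]}.

Lemma commuting_op_eval : commuting (fun i => op_eval (g i) T).
Proof. by move=> i j x; rewrite -!op_evalM // mulrC. Qed.

Lemma op_monomial_op_eval mu x :
  op_monomial (fun i => op_eval (g i) T) mu x =
  op_eval (\prod_(i < n) g i ^+ mu i) T x.
Proof.
have iter_op_eval i e P y :
    iter e (op_eval (g i) T) (op_eval P T y) = op_eval (g i ^+ e * P) T y.
  by elim: e => [|e IH] /=; rewrite ?mul1r // IH -op_evalM // exprS mulrA.
have on_seq (l : seq 'I_n) :
    foldr (fun i f y => iter (mu i) (op_eval (g i) T) (f y)) id l x =
    op_eval (\prod_(i <- l) g i ^+ mu i) T x.
  elim: l => [|i l IH] /=; first by rewrite big_nil op_eval1.
  by rewrite big_cons -iter_op_eval IH.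
by rewrite /op_monomial on_seq enumT.
Qed.

Lemma op_eval_comp f x :
  op_eval f (fun i => op_eval (g i) T) x = op_eval (f \mPo [tuple g i | i < n]) T x.
Proof.
rewrite comp_mpolyE op_eval_sum {1}/op_eval; apply: eq_bigr => mu _.
rewrite op_evalZ op_monomial_op_eval; congr (_ *: op_eval _ _ _).
by apply: eq_bigr => i _; rewrite tnth_mktuple.
Qed.

End Composition.

Section MpolyMorphisms.
Variables (R : comNzRingType) (k : nat).

Lemma eq_mpoly_rmorph (A : nzRingType) (F G : {rmorphism {mpoly R[k]} -> A}) :
  (forall c, F c%:MP = G c%:MP) -> (forall i, F 'X_i = G 'X_i) -> F =1 G.
Proof.
move=> FG_C FG_X P; rewrite (mpolyE P) !rmorph_sum; apply: eq_bigr => mu _.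
rewrite -mul_mpolyC !rmorphM FG_C mpolyXE_id !rmorph_prod; congr (_ * _).
by apply: eq_bigr => i _; rewrite !rmorphXn FG_X.
Qed.

Lemma meval_msym (s : 'S_k) (v : 'I_k -> R) (P : {mpoly R[k]}) :
  (msym s P).@[v] = P.@[fun i => v (s i)].
Proof.
apply: (@eq_mpoly_rmorph _ (meval v \o msym s) (meval (fun i => v (s i)))) => [c|i] /=.
  by rewrite /msym mmapC !mevalC.
by rewrite /msym mmapX mmap1U !mevalXU.
Qed.

Lemma meval_perm_symmetric (s : 'S_k) (v : 'I_k -> R) (P : {mpoly R[k]}) :
  P \is symmetric -> P.@[fun i => v (s i)] = P.@[v].
Proof. by move/issymP/(_ s) => {2}<-; rewrite meval_msym. Qed.

Lemma comp_mpolyA l n (P : {mpoly R[k]}) (L : k.-tuple {mpoly R[l]})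
    (M : l.-tuple {mpoly R[n]}) :
  (P \mPo L) \mPo M = P \mPo [tuple tnth L i \mPo M | i < k].
Proof.
apply: (@eq_mpoly_rmorph _ (comp_mpoly M \o comp_mpoly L)) => [c|i] /=.
  by rewrite !comp_mpolyC.
by rewrite !comp_mpolyXU -!tnth_nth tnth_mktuple.
Qed.

Lemma comp_mpolyXUn l (L : k.-tuple {mpoly R[l]}) i e :
  ('X_i ^+ e) \mPo L = tnth L i ^+ e.
Proof. by rewrite rmorphXn /= comp_mpolyXU -tnth_nth. Qed.

End MpolyMorphisms.

Lemma poly_fun_eq0 (R : numDomainType) (P : {poly R}) : (forall t, P.[t] = 0) -> P = 0.
Proof.
move=> P0; have [//|nzP] := eqVneq P 0; suff: (size P < size P)%N by rewrite ltnn.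
have := @max_poly_roots _ P [seq j%:R | j <- iota 0 (size P)] nzP.
rewrite size_map size_iota; apply; first by apply/allP => t _; rewrite /root P0.
by rewrite map_inj_uniq ?iota_uniq // => a b /eqP; rewrite eqr_nat => /eqP.
Qed.

Lemma lift_ord_max k (j : 'I_k) : lift ord_max j = widen_ord (leqnSn k) j.
Proof. by apply: val_inj; exact: lift_max. Qed.

Section MpolyUnivariate.
Variables (R : comNzRingType) (k : nat).
Local Notation widen := (widen_ord (leqnSn k)).

Lemma meval_muni (P : {mpoly R[k.+1]}) (v : 'I_k.+1 -> R) :
  P.@[v] = (map_poly (meval (fun j => v (widen j))) (muni P)).[v ord_max].
Proof.
rewrite muniE mevalE raddf_sum horner_sum; apply: eq_bigr => mu _.
rewrite /= map_polyZ map_polyXn hornerZ hornerXn.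
rewrite -[mpoly_meval__canonical__GRing_RMorphism _ _]/(meval _ _).
rewrite mevalZ mevalX -mulrA big_ord_recr /=; congr (_ * (_ * _)).
by apply: eq_bigr => j _; rewrite mnmE.
Qed.

Lemma mcoeff_muni (P : {mpoly R[k.+1]}) (mu : 'X_{1..k.+1}) :
  P@_mu = ((muni P)`_(mu ord_max))@_[multinom mu (widen i) | i < k].
Proof.
rewrite muniE coef_sum raddf_sum {1}(mpolyE P) raddf_sum /=; apply: eq_bigr => nu _.
rewrite coefZ coefXn mulr_natr mcoeffMn !mcoeffZ !mcoeffX.
have [->|nu_mu] := eqVneq nu mu; first by rewrite !eqxx.
case: eqP => [nu_mu_widen|_]; case: eqP => [nu_mu_max|_] /=; rewrite ?mulr0 ?mul0rn //.
case/eqP: nu_mu; apply/mnmP => i; case: (unliftP ord_max i) => [j ->|-> //].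
by rewrite lift_ord_max; move/mnmP: nu_mu_widen => /(_ j); rewrite !mnmE.
Qed.

End MpolyUnivariate.

Lemma mpoly_fun_eq0 (R : numDomainType) k (P : {mpoly R[k]}) :
  (forall v, P.@[v] = 0) -> P = 0.
Proof.
elim: k P => [|k IH] P P0.
  have := P0 (fun _ => 0); rewrite {1}(nvar0_mpolyC P) mevalC => P_0.
  by rewrite (nvar0_mpolyC P) P_0.
have muni_P0 : muni P = 0.
  apply/polyP => e; rewrite coef0; apply: IH => v.
  have vP : map_poly (meval v) (muni P) = 0.
    apply: poly_fun_eq0 => t.
    pose w (i : 'I_k.+1) := if unlift ord_max i is Some j then v j else t.
    have -> : v = (fun j => w (widen_ord (leqnSn k) j)).
      by apply: funext => j; rewrite /w -lift_ord_max liftK.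
    have -> : t = w ord_max by rewrite /w unlift_none.
    by rewrite -meval_muni P0.
  by have := congr1 (fun Q : {poly R} => Q`_e) vP; rewrite coef_map coef0.
by apply/mpolyP => mu; rewrite mcoeff_muni muni_P0 coef0 !mcoeff0.
Qed.

Lemma mpoly_scale_invariant (R : numDomainType) k (q : {mpoly R[k]}) (c : 'I_k -> R) :
  (forall v, q.@[fun i => c i * v i] = q.@[v]) ->
  forall mu, mu \in msupp q -> \prod_i c i ^+ mu i = 1.
Proof.
move=> q_c mu mu_q.
pose cX := [tuple c i *: 'X_i | i < k].
have cX_invariant : q \mPo cX = q.
  apply/eqP; rewrite -subr_eq0; apply/eqP; apply: mpoly_fun_eq0 => v.
  rewrite mevalB comp_mpoly_meval -[X in _ - X]q_c; apply/eqP; rewrite subr_eq0.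
  by apply/eqP/meval_eq => i; rewrite tnth_mktuple mevalZ mevalXU.
have cX_monomial (nu : 'X_{1..k}) :
    \prod_i tnth cX i ^+ nu i = (\prod_i c i ^+ nu i) *: 'X_[nu].
  by under eq_bigr do rewrite tnth_mktuple exprZn; rewrite scaler_prod -mpolyXE_id.
have := congr1 (mcoeff mu) cX_invariant.
rewrite comp_mpolyE raddf_sum /= (bigD1_seq mu) ?msupp_uniq //= [X in _ + X]big1.
  rewrite addr0 cX_monomial !mcoeffZ mcoeffX eqxx mulr1 -[RHS]mulr1 => /mulfI.
  by apply; rewrite -mcoeff_msupp.
by move=> nu nu_mu; rewrite cX_monomial !mcoeffZ mcoeffX (negbTE nu_mu) !mulr0.
Qed.

Lemma mpolyE_injective (R : nzRingType) k (I : finType) (g : I -> 'X_{1..k})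
    (q : {mpoly R[k]}) :
  injective g -> {subset msupp q <= codom g} -> q = \sum_i q@_(g i) *: 'X_[g i].
Proof.
move=> g_inj q_g; apply/mpolyP => mu; rewrite raddf_sum /=.
have [/codomP[i ->]|mu_g] := boolP (mu \in codom g).
  rewrite (bigD1 i) //= mcoeffZ mcoeffX eqxx mulr1 big1 ?addr0 // => j /negbTE j_i.
  by rewrite mcoeffZ mcoeffX (inj_eq g_inj) j_i mulr0.
have mu_q : mu \notin msupp q by apply: contra mu_g; apply: q_g.
rewrite (memN_msupp_eq0 mu_q) big1 // => i _; rewrite mcoeffZ mcoeffX.
case: eqP => [gi_mu|]; last by rewrite mulr0.
by case/negP: mu_g; rewrite -gi_mu codom_f.
Qed.

Lemma prim_root_exists (F : numClosedFieldType) k :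
  (0 < k)%N -> exists z : F, k.-primitive_root z.
Proof.
move=> k_gt0; have [rs XkE] := closed_field_poly_normal ('X^k - 1 : {poly F}).
rewrite (monicP (monicXnsubC 1 k_gt0)) scale1r in XkE.
have unity_rs : all k.-unity_root rs.
  by apply/allP => z; rewrite -root_prod_XsubC -XkE.
have uniq_rs : uniq rs.
  by rewrite -separable_prod_XsubC -XkE separable_Xn_sub_1 // pnatr_eq0 -lt0n.
have size_rs : (k <= size rs)%N.
  by rewrite -ltnS -(size_prod_XsubC rs id) -XkE size_XnsubC.
by have /hasP[z _] := has_prim_root k_gt0 unity_rs uniq_rs size_rs; exists z.
Qed.

Section Invariance.
Variables (R : realType) (m p n : nat).
Local Notation C := R[i].

Definition monomial_mx (s : 'S_n) (c : 'I_n -> C) : 'M[C]_n :=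
  \matrix_(i, j) (if j == s i then c i else 0).

Lemma mul_monomial_mx s c (z : 'cV[C]_n) i :
  (monomial_mx s c *m z) i 0 = c i * z (s i) 0.
Proof.
rewrite mxE (bigD1 (s i)) //= mxE eqxx big1 ?addr0 // => j /negbTE j_si.
by rewrite mxE j_si mul0r.
Qed.

Lemma G_invariantP (q : {mpoly C[n]}) :
  G_invariant m p q <->
  forall (s : 'S_n) (c : 'I_n -> C),
    (forall k, c k ^+ m = 1) -> (\prod_k c k) ^+ (m %/ p) = 1 ->
    forall v, q.@[fun k => c k * v (s k)] = q.@[v].
Proof.
split => [q_inv s c c_m c_prod v | q_inv _ [s [c [c_m c_prod ->]]] z].
  have G_sc : in_Gmpn m p (monomial_mx s c) by exists s, c.
  have := q_inv _ G_sc (\col_k v k); rewrite /G_act invmxK.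
  have -> : q.@[v] = q.@[fun i => (\col_k v k) i 0] by apply: meval_eq => i; rewrite mxE.
  by move <-; apply: meval_eq => i; rewrite mul_monomial_mx mxE.
rewrite /G_act invmxK -[RHS](q_inv s c c_m c_prod).
by apply: meval_eq => i; rewrite mul_monomial_mx.
Qed.

Lemma theta_invariant (s : 'S_n) (c : 'I_n -> C) (w : 'I_n -> C) i :
  (forall k, c k ^+ m = 1) -> (\prod_k c k) ^+ (m %/ p) = 1 ->
  (theta R m p i).@[fun k => c k * w (s k)] = (theta R m p i).@[w].
Proof.
move=> c_m c_prod; rewrite /theta; case: ifP => _.
  have powE v j : (tnth [tuple ('X_j ^+ m : {mpoly C[n]}) | j < n] j).@[v] = v j ^+ m.
    by rewrite tnth_mktuple rmorphXn /= mevalXU.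
  rewrite !comp_mpoly_meval -[RHS](meval_perm_symmetric s _ (mesym_sym _ _ _)).
  by apply: meval_eq => j; rewrite !powE exprMn c_m mul1r.
rewrite !rmorphXn !rmorph_prod /=.
under eq_bigr do rewrite mevalXU.
under [in RHS]eq_bigr do rewrite mevalXU.
rewrite big_split /= exprMn c_prod mul1r.
by rewrite [in RHS](reindex_inj (@perm_inj _ s)).
Qed.

Lemma comp_theta_G_invariant (f : {mpoly C[n]}) :
  G_invariant m p (f \mPo [tuple theta R m p i | i < n]).
Proof.
apply/G_invariantP => s c c_m c_prod v; rewrite !comp_mpoly_meval.
by apply: meval_eq => i; rewrite !tnth_mktuple theta_invariant.
Qed.

End Invariance.

Lemma sup_abs_closed_Theta (R : realType) m p n (f : {mpoly R[i][n]}) :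
  sup_abs (@closed_Theta R m p n) f =
  sup_abs (@closed_polydisc R n) (f \mPo [tuple theta R m p i | i < n]).
Proof.
rewrite /sup_abs /closed_Theta image_comp; congr sup; congr image.
apply: funext => z /=; rewrite comp_mpoly_meval; congr (cabs (meval _ f)).
by apply: funext => i; rewrite tnth_mktuple.
Qed.

Section InvariantPolynomials.
Variables (R : realType) (m p n : nat).
Local Notation C := R[i].
Hypotheses (m_gt0 : (0 < m)%N) (p_dvd_m : (p %| m)%N).
Variable q : {mpoly C[n]}.
Hypothesis q_invariant : G_invariant m p q.

Let q_inv := (@G_invariantP R m p n q).1 q_invariant.

Lemma G_invariant_perm (s : 'S_n) v : q.@[fun k => v (s k)] = q.@[v].
Proof.
transitivity q.@[fun k => 1 * v (s k)]; first by apply: meval_eq => k; rewrite mul1r.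
by apply: q_inv => [k|]; rewrite ?big1_eq expr1n.
Qed.

Lemma G_invariant_symmetric : q \is symmetric.
Proof.
apply/issymP => s; apply/eqP; rewrite -subr_eq0; apply/eqP; apply: mpoly_fun_eq0 => v.
by rewrite mevalB meval_msym G_invariant_perm subrr.
Qed.

Lemma G_invariant_msupp_diag (c : 'I_n -> C) :
  (forall k, c k ^+ m = 1) -> (\prod_k c k) ^+ (m %/ p) = 1 ->
  forall mu, mu \in msupp q -> \prod_i c i ^+ mu i = 1.
Proof.
move=> c_m c_prod; apply: mpoly_scale_invariant => v.
transitivity q.@[fun k => c k * v ((1%g : 'S_n) k)]; last exact: q_inv.
by apply: meval_eq => k; rewrite perm1.
Qed.

Variable z : C.
Hypothesis z_prim : m.-primitive_root z.

Let z_m : z ^+ m = 1 := prim_expr_order z_prim.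

Let z_neq0 : z != 0.
Proof.
apply: contra_eq_neq z_m => ->.
by rewrite expr0n gtn_eqF // eq_sym oner_neq0.
Qed.

Lemma G_invariant_msupp_congr mu :
  mu \in msupp q -> forall i j, mu i = mu j %[mod m].
Proof.
move=> mu_q i j; have [<-//|i_j] := eqVneq i j.
pose c k := if k == i then z else if k == j then z^-1 else 1.
have c_other k : k != i -> k != j -> c k = 1 by rewrite /c => /negbTE-> /negbTE->.
have c_i : c i = z by rewrite /c eqxx.
have c_j : c j = z^-1 by rewrite /c eq_sym (negbTE i_j) eqxx.
have prod_c (e : 'I_n -> nat) : \prod_k c k ^+ e k = z ^+ e i * z^-1 ^+ e j.
  rewrite (bigD1 i) //= (big_only1 j) /=; first by rewrite c_i c_j.
    by rewrite eq_sym.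
  by move=> k k_j k_i; rewrite c_other ?expr1n.
have c_m k : c k ^+ m = 1.
  by rewrite /c; case: ifP => _; last case: ifP => _; rewrite ?exprVn ?z_m ?invr1 ?expr1n.
have c_prod : (\prod_k c k) ^+ (m %/ p) = 1.
  by rewrite (eq_bigr _ (fun k _ => esym (expr1 (c k)))) prod_c !expr1 divff ?expr1n.
have := G_invariant_msupp_diag c_m c_prod mu_q.
rewrite prod_c exprVn => /divr1_eq/eqP.
by rewrite (eq_prim_root_expr z_prim) => /eqP.
Qed.

Lemma G_invariant_msupp_dvd mu : mu \in msupp q -> forall i, (m %/ p %| mu i)%N.
Proof.
move=> mu_q i; pose c k := if k == i then z ^+ p else 1.
have prod_c (e : 'I_n -> nat) : \prod_k c k ^+ e k = z ^+ (p * e i).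
  by rewrite (big_only1 i) // => [|k /negbTE k_i _]; rewrite /c ?eqxx ?exprM ?k_i ?expr1n.
have c_m k : c k ^+ m = 1.
  by rewrite /c; case: ifP => _; [rewrite exprAC z_m | ]; rewrite expr1n.
have c_prod : (\prod_k c k) ^+ (m %/ p) = 1.
  rewrite (eq_bigr _ (fun k _ => esym (expr1 (c k)))) prod_c -exprM.
  by rewrite muln1 mulnC divnK.
have := G_invariant_msupp_diag c_m c_prod mu_q.
rewrite prod_c => /eqP; rewrite -(prim_order_dvd z_prim).
have p_gt0 := dvdn_gt0 m_gt0 p_dvd_m.
by rewrite -{1}(divnK p_dvd_m) [(p * _)%N]mulnC dvdn_pmul2r.
Qed.

End InvariantPolynomials.

Section ThetaComposition.
Variables (R : realType) (m p n : nat).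
Local Notation C := R[i].
Hypotheses (m_gt0 : (0 < m)%N) (p_dvd_m : (p %| m)%N).
Variable q : {mpoly C[n.+1]}.
Hypothesis q_symmetric : q \is symmetric.
Hypothesis q_congr : forall mu, mu \in msupp q -> forall i j, mu i = mu j %[mod m].
Hypothesis q_dvd : forall mu, mu \in msupp q -> forall i, (m %/ p %| mu i)%N.

Local Notation q0 := (m %/ p)%N.
Local Notation K := (msize q).
Local Notation thetas := [tuple theta R m p i | i < n.+1].
Local Notation Xm := [tuple ('X_i ^+ m : {mpoly C[n.+1]}) | i < n.+1].
Local Notation mesyms := [tuple mesym n.+1 C i.+1 | i < n.+1].

Let q0_gt0 : (0 < q0)%N.
Proof. by rewrite divn_gt0 ?(dvdn_gt0 m_gt0 p_dvd_m) // dvdn_leq. Qed.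

Let q0_mul_p : (q0 * p)%N = m.
Proof. exact: divnK. Qed.

Let q0_dvd_m : (q0 %| m)%N.
Proof. by rewrite -{2}q0_mul_p dvdn_mulr. Qed.

Definition theta_exponent (j : nat) (b : 'X_{1..n.+1}) : 'X_{1..n.+1} :=
  [multinom (q0 * j + m * b i)%N | i < n.+1].

Lemma theta_exponent_mod (j : 'I_p) b i : (theta_exponent j b i %% m = q0 * j)%N.
Proof.
by rewrite mnmE addnC [(m * _)%N]mulnC modnMDl modn_small // -{2}q0_mul_p ltn_pmul2l.
Qed.

Lemma theta_exponent_div (j : 'I_p) b i : (theta_exponent j b i %/ m)%N = b i.
Proof.
rewrite mnmE addnC [(m * _)%N]mulnC divnMDl // divn_small ?addn0 //.
by rewrite -{2}q0_mul_p ltn_pmul2l.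
Qed.

Let exponent_pair (jb : 'I_p * 'X_{1..n.+1 < K}) := theta_exponent jb.1 jb.2.

Lemma exponent_pair_inj : injective exponent_pair.
Proof.
move=> [j b] [j' b'] e.
have e_at i : theta_exponent j b i = theta_exponent j' b' i :=
  congr1 (fun mu : 'X_{1..n.+1} => mu i) e.
have := e_at ord0; move/(congr1 (modn^~ m)); rewrite !theta_exponent_mod.
move/eqP; rewrite eqn_pmul2l // => /eqP/val_inj j_j'; subst j'.
congr (_, _); apply/val_inj/mnmP => i.
by have := congr1 (divn^~ m) (e_at i); rewrite !theta_exponent_div.
Qed.

Lemma msupp_exponent_pair : {subset msupp q <= codom exponent_pair}.
Proof.
move=> mu mu_q; have q0_mu0 : (q0 %| mu ord0 %% m)%N.
  by rewrite /dvdn modn_dvdm //; apply: q_dvd.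
have j_lt_p : ((mu ord0 %% m) %/ q0 < p)%N.
  by rewrite ltn_divLR // mulnC q0_mul_p ltn_pmod.
have b_lt_K : (mdeg [multinom mu i %/ m | i < n.+1] < K)%N.
  apply: leq_ltn_trans (msize_mdeg_lt mu_q); rewrite !mdegE.
  by apply: leq_sum => i _; rewrite mnmE leq_div.
apply/codomP; exists (Ordinal j_lt_p, BMultinom b_lt_K); apply/mnmP => i.
rewrite /= mnmE mulnC divnK // mnmE (q_congr mu_q ord0 i) addnC mulnC.
by rewrite -divn_eq.
Qed.

Definition theta_slice (j : nat) : {mpoly C[n.+1]} :=
  \sum_(b : 'X_{1..n.+1 < K}) q@_(theta_exponent j b) *: 'X_[b].

Lemma mcoeff_theta_slice j b : (theta_slice j)@_b = q@_(theta_exponent j b).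
Proof.
have [b_lt_K|K_le_b] := ltnP (mdeg b) K.
  exact: (mcoeff_mpoly (fun b => q@_(theta_exponent j b))).
rewrite raddf_sum big1 /= => [|b' _]; last first.
  rewrite mcoeffZ mcoeffX; case: eqP => [b'_b|]; last by rewrite mulr0.
  by have := bmdeg b'; rewrite b'_b ltnNge K_le_b.
apply/esym/memN_msupp_eq0/msize_mdeg_ge; apply: leq_trans K_le_b _.
rewrite !mdegE; apply: leq_sum => i _; rewrite mnmE.
by rewrite (leq_trans (leq_pmull _ m_gt0)) // leq_addl.
Qed.

Lemma theta_slice_symmetric j : theta_slice j \is symmetric.
Proof.
apply/issymP => s; apply/mpolyP => b; rewrite mcoeff_sym !mcoeff_theta_slice.
have -> : theta_exponent j [multinom b (s i) | i < n.+1] =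
          [multinom theta_exponent j b (s i) | i < n.+1].
  by apply/mnmP => i; rewrite !mnmE.
by rewrite -mcoeff_sym (issymP _ q_symmetric).
Qed.

Lemma monomial_theta_exponent j b :
  'X_[theta_exponent j b] = (\prod_i 'X_i) ^+ (q0 * j) * ('X_[b] \mPo Xm).
Proof.
rewrite comp_mpolyX !mpolyXE_id -prodrXl -big_split; apply: eq_bigr => i _.
by rewrite /= tnth_mktuple mnmE exprD (exprM _ m).
Qed.

Lemma theta_sliceE :
  q = \sum_(j < p) (\prod_i 'X_i) ^+ (q0 * j) * (theta_slice j \mPo Xm).
Proof.
rewrite {1}(mpolyE_injective exponent_pair_inj msupp_exponent_pair).
rewrite -(pair_bigA _ (fun (j : 'I_p) (b : 'X_{1..n.+1 < K}) =>
  q@_(theta_exponent j b) *: 'X_[theta_exponent j b])).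
apply: eq_bigr => j _; rewrite raddf_sum /= mulr_sumr; apply: eq_bigr => b _.
by rewrite comp_mpolyZ -scalerAr -monomial_theta_exponent.
Qed.

Local Notation Xpow_last :=
  [tuple (if (i < n)%N then 'X_i else 'X_i ^+ p : {mpoly C[n.+1]}) | i < n.+1].

Lemma theta_last : tnth thetas ord_max = (\prod_i 'X_i) ^+ q0.
Proof. by rewrite tnth_mktuple /theta ltnn. Qed.

Lemma Xpow_last_thetas :
  [tuple tnth Xpow_last i \mPo thetas | i < n.+1] =
  [tuple tnth mesyms i \mPo Xm | i < n.+1].
Proof.
apply: eq_mktuple => i; rewrite !tnth_mktuple; case: ifP => i_lt_n.
  by rewrite comp_mpolyXU -tnth_nth tnth_mktuple /theta ltnS i_lt_n.
have -> : i = ord_max by apply/val_inj/eqP; rewrite eqn_leq -ltnS ltn_ord leqNgt i_lt_n.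
rewrite comp_mpolyXUn theta_last -exprM q0_mul_p mesymnnE rmorph_prod -prodrXl.
by apply: eq_bigr => k _; rewrite /= comp_mpolyXU -tnth_nth tnth_mktuple.
Qed.

Lemma symmetric_theta_comp : exists f, q = f \mPo thetas.
Proof.
pose t j := sval (sym_fundamental (theta_slice_symmetric j)).
have tE j : t j \mPo mesyms = theta_slice j.
  by rewrite /t; case: sym_fundamental => ? [].
exists (\sum_(j < p) 'X_ord_max ^+ j * (t j \mPo Xpow_last)).
rewrite {1}theta_sliceE raddf_sum /=; apply: eq_bigr => j _.
rewrite rmorphM /= comp_mpolyXUn theta_last -exprM.
by rewrite comp_mpolyA Xpow_last_thetas -comp_mpolyA tE.
Qed.

End ThetaComposition.

Theorem G_invariant_theta_comp (R : realType) m p n (q : {mpoly R[i][n]}) :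
  (0 < m)%N -> (p %| m)%N -> (0 < n)%N -> G_invariant m p q ->
  exists f, q = f \mPo [tuple theta R m p i | i < n].
Proof.
case: n q => // n q m_gt0 p_dvd_m _ q_invariant.
have [z z_prim] := prim_root_exists R[i] m_gt0.
apply: symmetric_theta_comp => //.
- exact: G_invariant_symmetric q_invariant.
- by move=> mu /(G_invariant_msupp_congr m_gt0 q_invariant z_prim).
- by move=> mu /(G_invariant_msupp_dvd m_gt0 p_dvd_m q_invariant z_prim).
Qed.

Theorem proposition2p8 (R : realType) (m p n : nat)
  (H : lmodType R[i]) (ip : H -> H -> R[i]) (T : 'I_n -> {linear H -> H}) :
  (0 < m)%N -> (0 < p)%N -> (p %| m)%N -> (1 < n)%N ->
  hilbert_space ip ->
  commuting (fun i => (T i : H -> H)) ->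
  (forall i, contraction ip (T i)) ->
  (Theta_contraction m p ip (fun i => op_eval (@theta R m p n i) (fun j => (T j : H -> H)))
   <-> forall q : {mpoly R[i][n]}, G_invariant m p q -> vN_ineq ip (fun j => (T j : H -> H)) q).
Proof.
move=> m_gt0 _ p_dvd_m n_gt1 _ T_commute _.
have T_linear i : linear (T i : H -> H) by exact: linearP.
split=> [[_ theta_T_bound] q q_invariant | vN_T].
  have [f ->] := G_invariant_theta_comp m_gt0 p_dvd_m (ltnW n_gt1) q_invariant.
  by move=> x; rewrite -op_eval_comp // -sup_abs_closed_Theta; apply: theta_T_bound.
split; first exact: commuting_op_eval.
move=> f x; rewrite op_eval_comp // sup_abs_closed_Theta.
exact: vN_T _ (comp_theta_G_invariant f) x.
Qed.
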